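(* Let $\beta,\delta\in(0,1)$, $K>0$, and let $\eta_1,\eta_2\ge0$ be constants. Consider $$\frac{df}{dt}=\tfrac12 fm\beta L-\delta f-\eta_1 f,\qquad \frac{dm}{dt}=\tfrac12 fm\beta L-\delta m-\eta_2 m,\qquad L=1-\frac{f+m}{K}.$$ If $\beta K<2\delta+\eta_1+\eta_2$, then the trivial equilibrium $(0,0)$ is globally asymptotically stable.
   Context: $f,m$ are female and male densities, and $\eta_1,\eta_2$ are the female and male harvesting rates (the ''female harvesting male harvesting'' model). *)

From Stdlib Require Import Reals.
From Coquelicot Require Import Coquelicot.
Open Scope R_scope.

Definition Lmate (K f m : R) : R := 1 - (f + m) / K.

Definition rhs_f (beta delta eta1 K f m : R) : R :=
  / 2 * f * m * beta * Lmate K f m - delta * f - eta1 * f.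
Definition rhs_m (beta delta eta2 K f m : R) : R :=
  / 2 * f * m * beta * Lmate K f m - delta * m - eta2 * m.

Definition is_solution (beta delta eta1 eta2 K : R) (f m : R -> R) : Prop :=
  (forall eps, 0 < eps -> exists d, 0 < d /\
     forall t, 0 <= t < d -> Rabs (f t - f 0) < eps /\ Rabs (m t - m 0) < eps) /\
  (forall t, 0 < t ->
     is_derive f t (rhs_f beta delta eta1 K (f t) (m t)) /\
     is_derive m t (rhs_m beta delta eta2 K (f t) (m t))).

Definition nrm2 (x y : R) : R := sqrt (x ^ 2 + y ^ 2).

(* Global asymptotic stability of (0,0) on the (biologically relevant)
   nonnegative quadrant: Lyapunov stability + global attractivity. *)
Definition GAS_origin (beta delta eta1 eta2 K : R) : Prop :=
  (forall eps, 0 < eps -> exists d, 0 < d /\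
     forall f m : R -> R, is_solution beta delta eta1 eta2 K f m ->
       0 <= f 0 -> 0 <= m 0 -> nrm2 (f 0) (m 0) < d ->
       forall t, 0 <= t -> nrm2 (f t) (m t) < eps) /\
  (forall f m : R -> R, is_solution beta delta eta1 eta2 K f m ->
       0 <= f 0 -> 0 <= m 0 ->
       is_lim f p_infty 0 /\ is_lim m p_infty 0).

From Stdlib Require Import Reals Lra.
From Coquelicot Require Import Coquelicot.
Open Scope R_scope.

(* The nonnegative quadrant is invariant: each equation has the form
   g' = g a(t) with a locally bounded, so a solution starting at g >= 0 cannot
   become negative.  On the quadrant, V = f + m + A f m with
   A = 2 beta / (2 delta + eta1 + eta2 - beta K) satisfies V' <= - k V for
   k = min (delta, (2 delta + eta1 + eta2 - beta K) / 2): since L (f + m) <= K / 4,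
   the cross term A (f m)' <= - 2 beta f m absorbs the mating gain beta f m L.
   Hence f + m <= V (t) <= V (0) e^(-k t), which gives both Lyapunov stability
   and convergence to the origin. *)

Definition right_continuous (g : R -> R) (t : R) : Prop :=
  filterlim g (at_right t) (locally (g t)).

Lemma continuous_right_continuous g t : continuous g t -> right_continuous g t.
Proof. apply filterlim_filter_le_1, filter_le_within. Qed.

Lemma is_derive_right_continuous g t l : is_derive g t l -> right_continuous g t.
Proof.
  intros Hg. apply continuous_right_continuous.
  apply (ex_derive_continuous (K := R_AbsRing) (V := R_NormedModule)). now exists l.
Qed.

Lemma right_continuous_of_eps g a :
  (forall eps, 0 < eps -> exists d, 0 < d /\
     forall t, a <= t < a + d -> Rabs (g t - g a) < eps) ->
  right_continuous g a.
Proof.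
  intros Hg. apply filterlim_locally. intros eps.
  destruct (Hg eps (cond_pos eps)) as [d [Hd Ht]].
  exists (mkposreal d Hd). intros t Hball Hat. apply Ht.
  change (Rabs (t - a) < d) in Hball. apply Rabs_def2 in Hball. lra.
Qed.

Lemma right_continuous_const c t : right_continuous (fun _ => c) t.
Proof. apply filterlim_const. Qed.

Lemma right_continuous_opp g t :
  right_continuous g t -> right_continuous (fun x => - g x) t.
Proof.
  intros Hg. eapply filterlim_comp; [exact Hg|].
  apply (filterlim_opp (V := R_NormedModule)).
Qed.

Lemma right_continuous_plus g h t : right_continuous g t -> right_continuous h t ->
  right_continuous (fun x => g x + h x) t.
Proof.
  intros Hg Hh. eapply filterlim_comp_2; [exact Hg|exact Hh|].
  apply (filterlim_plus (V := R_NormedModule)).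
Qed.

Lemma right_continuous_mult g h t : right_continuous g t -> right_continuous h t ->
  right_continuous (fun x => g x * h x) t.
Proof.
  intros Hg Hh. eapply filterlim_comp_2; [exact Hg|exact Hh|].
  apply (filterlim_mult (K := R_AbsRing)).
Qed.

Lemma right_continuous_exp k t : right_continuous (fun x => exp (k * x)) t.
Proof.
  apply (is_derive_right_continuous _ _ (k * exp (k * t))). auto_derive; [auto|ring].
Qed.

Lemma right_continuous_approx g a b eps : right_continuous g a -> a < b -> 0 < eps ->
  exists y, a < y <= b /\ Rabs (g y - g a) < eps.
Proof.
  intros Hg Hab Heps.
  destruct (proj1 (filterlim_locally g (g a)) Hg (mkposreal eps Heps)) as [d Hd].
  exists (Rmin b (a + d / 2)).
  assert (Hd0 := cond_pos d).
  assert (Hmin : a < Rmin b (a + d / 2) <= b)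
    by (split; [apply Rmin_glb_lt; lra|apply Rmin_l]).
  split; [exact Hmin|]. apply (Hd (Rmin b (a + d / 2))); [|lra].
  change (Rabs (Rmin b (a + d / 2) - a) < d).
  rewrite Rabs_right by lra. generalize (Rmin_r b (a + d / 2)). lra.
Qed.

Lemma right_continuous_bounded_above g s : right_continuous g s ->
  exists M d, 0 < d /\ forall t, s < t < s + d -> g t <= M.
Proof.
  intros Hg. destruct (proj1 (filterlim_locally g (g s)) Hg (mkposreal 1 Rlt_0_1)) as [d Hd].
  exists (g s + 1), d. split; [apply cond_pos|]. intros t Ht.
  assert (Hts : ball s d t) by (change (Rabs (t - s) < d); rewrite Rabs_right; lra).
  specialize (Hd t Hts ltac:(lra)). change (Rabs (g t - g s) < 1) in Hd.
  apply Rabs_def2 in Hd. lra.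
Qed.

Lemma derive_nonpos_le g dg x y :
  (forall t, x <= t <= y -> is_derive g t (dg t) /\ dg t <= 0) -> x <= y -> g y <= g x.
Proof.
  intros Hg Hxy.
  destruct (MVT_gen g x y dg) as [c [Hc Hmvt]];
    rewrite ?Rmin_left, ?Rmax_right in * by lra.
  - intros t Ht. apply Hg. lra.
  - intros t Ht. apply continuity_pt_filterlim.
    apply (ex_derive_continuous (K := R_AbsRing) (V := R_NormedModule)).
    exists (dg t). apply Hg. lra.
  - assert (dg c <= 0) by (apply Hg; lra). nra.
Qed.

Lemma right_continuous_derive_nonpos_le g dg a b : right_continuous g a ->
  (forall t, a < t <= b -> is_derive g t (dg t) /\ dg t <= 0) -> a <= b -> g b <= g a.
Proof.
  intros Hga Hg Hab. destruct (Req_dec a b) as [<-|Hne]; [lra|].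
  apply Rnot_lt_le. intros Hlt.
  destruct (right_continuous_approx g a b (g b - g a) Hga) as [y [Hy Hgy]]; [lra|lra|].
  apply Rabs_def2 in Hgy.
  assert (g b <= g y) by (apply (derive_nonpos_le g dg); [intros; apply Hg|]; lra).
  lra.
Qed.

Lemma is_derive_mult_exp g dg k t : is_derive g t dg ->
  is_derive (fun x => g x * exp (k * x)) t ((dg + k * g t) * exp (k * t)).
Proof.
  intros Hg.
  assert (He : is_derive (fun x => exp (k * x)) t (k * exp (k * t)))
    by (auto_derive; [auto|ring]).
  eapply is_derive_ext_loc; [apply filter_forall; reflexivity|].
  replace ((dg + k * g t) * exp (k * t))
    with (dg * exp (k * t) + g t * (k * exp (k * t))) by ring.
  exact (is_derive_mult (K := R_AbsRing) _ _ t _ _ Hg He ltac:(intros; apply Rmult_comm)).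
Qed.

Lemma last_nonneg_point g t1 : 0 <= t1 -> 0 <= g 0 -> g t1 < 0 ->
  (forall t, 0 < t <= t1 -> continuous g t) ->
  exists r, 0 <= r < t1 /\ 0 <= g r /\ forall t, r < t <= t1 -> g t < 0.
Proof.
  intros Ht1 Hg0 Hg1 Hcont.
  set (E := fun x => 0 <= x <= t1 /\ 0 <= g x).
  destruct (completeness E) as [r [Hub Hlub]].
  { exists t1. intros x [Hx _]. lra. }
  { exists 0. split; lra. }
  assert (Hr0 : 0 <= r) by (apply Hub; split; lra).
  assert (Hrt : r <= t1) by (apply Hlub; intros x [Hx _]; lra).
  assert (Hgr : 0 <= g r).
  { destruct (Req_dec r 0) as [->|Hr]; [exact Hg0|].
    apply Rnot_lt_le. intros Hlt.
    assert (Hcr : continuous g r) by (apply Hcont; lra).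
    destruct (proj1 (filterlim_locally g (g r)) Hcr
                (mkposreal _ (Ropp_0_gt_lt_contravar _ Hlt))) as [d Hd].
    assert (Hd0 := cond_pos d).
    assert (r <= r - d / 2); [|lra].
    apply Hlub. intros x [Hx Hgx]. apply Rnot_lt_le. intros Hxr.
    assert (x <= r) by (apply Hub; split; lra).
    assert (Hball : ball r d x) by (change (Rabs (x - r) < d); rewrite Rabs_left1; lra).
    specialize (Hd x Hball). change (Rabs (g x - g r) < - g r) in Hd.
    apply Rabs_def2 in Hd. lra. }
  exists r. repeat split; try lra.
  - destruct (Req_dec r t1) as [->|]; lra.
  - intros t Ht. apply Rnot_le_lt. intros Hgt.
    assert (t <= r) by (apply Hub; split; lra). lra.
Qed.

Lemma nonneg_of_linear_derive (g a : R -> R) :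
  0 <= g 0 ->
  (forall t, 0 <= t -> right_continuous g t /\ right_continuous a t) ->
  (forall t, 0 < t -> is_derive g t (g t * a t)) ->
  forall t, 0 <= t -> 0 <= g t.
Proof.
  intros Hg0 Hrc Hder t Ht. apply Rnot_lt_le. intros Hneg.
  destruct (last_nonneg_point g t Ht Hg0 Hneg) as [r [Hr [Hgr Hlast]]].
  { intros s Hs. apply (ex_derive_continuous (K := R_AbsRing) (V := R_NormedModule)).
    exists (g s * a s). apply Hder. lra. }
  destruct (right_continuous_bounded_above a r (proj2 (Hrc r ltac:(lra))))
    as [M [d [Hd HM]]].
  set (b := Rmin t (r + d / 2)).
  assert (Hb : r < b <= t) by (split; [apply Rmin_glb_lt|apply Rmin_l]; lra).
  assert (Hbd : b < r + d) by (generalize (Rmin_r t (r + d / 2)); unfold b; lra).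
  (* [- g x * exp (- M x)] is nonincreasing wherever [g < 0] and [a <= M] *)
  assert (Hpsi : - g b * exp (- M * b) <= - g r * exp (- M * r)).
  { apply (right_continuous_derive_nonpos_le (fun x => - g x * exp (- M * x))
      (fun x => (- (g x * a x) + - M * - g x) * exp (- M * x))); [| |lra].
    - apply right_continuous_mult; [apply right_continuous_opp|apply right_continuous_exp].
      apply Hrc; lra.
    - intros x Hx. split.
      + apply (is_derive_mult_exp (fun x => - g x)).
        exact (is_derive_opp (K := R_AbsRing) g x _ (Hder x ltac:(lra))).
      + assert (g x < 0) by (apply Hlast; lra).
        assert (a x <= M) by (apply HM; lra).
        assert (Hexp := exp_pos (- M * x)).
        apply Rmult_le_0_r; [nra|lra]. }
  assert (g b < 0) by (apply Hlast; lra).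
  assert (He1 := exp_pos (- M * b)). assert (He2 := exp_pos (- M * r)).
  nra.
Qed.

Definition lyap (A x y : R) : R := x + y + A * (x * y).

Lemma add_le_lyap A x y : 0 <= A -> 0 <= x -> 0 <= y -> x + y <= lyap A x y.
Proof. intros HA Hx Hy. unfold lyap. assert (0 <= x * y) by nra. nra. Qed.

Lemma is_derive_lyap A f m t F M : is_derive f t F -> is_derive m t M ->
  is_derive (fun s => lyap A (f s) (m s)) t (F + M + A * (F * m t + f t * M)).
Proof.
  intros HF HM.
  assert (Hsum := is_derive_plus (K := R_AbsRing) _ _ t _ _ HF HM).
  assert (Hprod := is_derive_mult (K := R_AbsRing) _ _ t _ _ HF HM
                     ltac:(intros; apply Rmult_comm)).
  exact (is_derive_plus (K := R_AbsRing) _ _ t _ _ Hsum (is_derive_scal _ t A _ Hprod)).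
Qed.

Section Model.

Variables beta delta eta1 eta2 K : R.

Lemma solution_right_continuous f m : is_solution beta delta eta1 eta2 K f m ->
  forall t, 0 <= t -> right_continuous f t /\ right_continuous m t.
Proof.
  intros [Hcont0 Hder] t Ht. destruct (Req_dec t 0) as [->|Hne].
  - split; apply right_continuous_of_eps; intros eps Heps;
      destruct (Hcont0 eps Heps) as [d [Hd Hclose]]; exists d; split; auto;
      intros s Hs; apply Hclose; lra.
  - destruct (Hder t ltac:(lra)) as [Hf Hm].
    split; eapply is_derive_right_continuous; eassumption.
Qed.

Lemma right_continuous_mating_rate x y z c t :
  right_continuous x t -> right_continuous y t -> right_continuous z t ->
  right_continuous (fun s => / 2 * z s * beta * Lmate K (x s) (y s) - c) t.
Proof.
  intros Hx Hy Hz. unfold Lmate, Rminus, Rdiv.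
  repeat first [ exact Hx | exact Hy | exact Hz | apply right_continuous_const
               | apply right_continuous_plus | apply right_continuous_mult
               | apply right_continuous_opp ].
Qed.

Lemma solution_nonneg f m : is_solution beta delta eta1 eta2 K f m ->
  0 <= f 0 -> 0 <= m 0 -> forall t, 0 <= t -> 0 <= f t /\ 0 <= m t.
Proof.
  intros Hsol Hf0 Hm0 t Ht.
  assert (Hrc := solution_right_continuous f m Hsol).
  destruct Hsol as [_ Hder]. split.
  - apply (nonneg_of_linear_derive f
      (fun s => / 2 * m s * beta * Lmate K (f s) (m s) - (delta + eta1))); auto.
    + intros s Hs. destruct (Hrc s Hs). split; [auto|].
      apply right_continuous_mating_rate; auto.
    + intros s Hs. replace (f s * _) with (rhs_f beta delta eta1 K (f s) (m s))
        by (unfold rhs_f; ring).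
      apply Hder; auto.
  - apply (nonneg_of_linear_derive m
      (fun s => / 2 * f s * beta * Lmate K (f s) (m s) - (delta + eta2))); auto.
    + intros s Hs. destruct (Hrc s Hs). split; [auto|].
      apply right_continuous_mating_rate; auto.
    + intros s Hs. replace (m s * _) with (rhs_m beta delta eta2 K (f s) (m s))
        by (unfold rhs_m; ring).
      apply Hder; auto.
Qed.

Hypothesis HK : 0 < K.

Lemma Lmate_le_1 x y : 0 <= x + y -> Lmate K x y <= 1.
Proof.
  intros Hs. unfold Lmate. assert (0 <= (x + y) / K) by (apply Rdiv_le_0_compat; lra). lra.
Qed.

Lemma Lmate_mul_sum_le x y : Lmate K x y * (x + y) <= K / 4.
Proof.
  assert (E : (K / 4 - Lmate K x y * (x + y)) * K = (K / 2 - (x + y)) ^ 2)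
    by (unfold Lmate; field; lra).
  assert (0 <= (K / 2 - (x + y)) ^ 2) by apply pow2_ge_0.
  nra.
Qed.

Variables A k : R.
Hypotheses (Hbeta : 0 <= beta) (Heta1 : 0 <= eta1) (Heta2 : 0 <= eta2) (HA : 0 <= A)
  (HAc : 2 * beta <= A * (2 * delta + eta1 + eta2 - beta * K))
  (Hkd : k <= delta) (HkA : k * A <= beta).

(* [F + M + A (F y + x M)] is the derivative of [lyap A] along the flow. *)
Lemma lyap_rate_nonpos x y : 0 <= x -> 0 <= y ->
  let F := rhs_f beta delta eta1 K x y in
  let M := rhs_m beta delta eta2 K x y in
  F + M + A * (F * y + x * M) + k * lyap A x y <= 0.
Proof.
  intros Hx Hy F M.
  set (L := Lmate K x y).
  assert (HL1 : L <= 1) by (apply Lmate_le_1; lra).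
  assert (HLS : L * (x + y) <= K / 4) by apply Lmate_mul_sum_le.
  assert (HP : 0 <= x * y) by nra.
  assert (Hsum : F + M <= beta * (x * y) - delta * (x + y)).
  { assert (0 <= beta * (x * y) * (1 - L)) by (apply Rmult_le_pos; nra).
    assert (0 <= eta1 * x) by nra. assert (0 <= eta2 * y) by nra.
    unfold F, M, rhs_f, rhs_m. fold L. nra. }
  assert (Hcross : A * (F * y + x * M) <= - 2 * beta * (x * y)).
  { assert (E : F * y + x * M
              = x * y * (/ 2 * beta * (L * (x + y)) - (2 * delta + eta1 + eta2)))
      by (unfold F, M, rhs_f, rhs_m; fold L; ring).
    rewrite E.
    assert (/ 2 * beta * (L * (x + y)) <= beta * K) by nra.
    assert (0 <= A * (x * y) * (beta * K - / 2 * beta * (L * (x + y))))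
      by (apply Rmult_le_pos; nra).
    assert (0 <= x * y * (A * (2 * delta + eta1 + eta2 - beta * K) - 2 * beta))
      by (apply Rmult_le_pos; lra).
    nra. }
  unfold lyap. nra.
Qed.

Lemma solution_lyap_decay f m : is_solution beta delta eta1 eta2 K f m ->
  0 <= f 0 -> 0 <= m 0 ->
  forall t, 0 <= t -> lyap A (f t) (m t) * exp (k * t) <= lyap A (f 0) (m 0).
Proof.
  intros Hsol Hf0 Hm0 t Ht.
  assert (Hpos := solution_nonneg f m Hsol Hf0 Hm0).
  destruct (solution_right_continuous f m Hsol 0 (Rle_refl 0)) as [Hrcf Hrcm].
  destruct Hsol as [_ Hder].
  replace (lyap A (f 0) (m 0)) with (lyap A (f 0) (m 0) * exp (k * 0))
    by (rewrite Rmult_0_r, exp_0; ring).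
  apply (right_continuous_derive_nonpos_le (fun s => lyap A (f s) (m s) * exp (k * s))
    (fun s => let F := rhs_f beta delta eta1 K (f s) (m s) in
              let M := rhs_m beta delta eta2 K (f s) (m s) in
              (F + M + A * (F * m s + f s * M) + k * lyap A (f s) (m s)) * exp (k * s)));
    [|intros s Hs; split|lra].
  - unfold lyap.
    repeat first [ exact Hrcf | exact Hrcm | apply right_continuous_exp
                 | apply right_continuous_const | apply right_continuous_plus
                 | apply right_continuous_mult ].
  - destruct (Hder s ltac:(lra)) as [HF HM].
    apply (is_derive_mult_exp (fun s => lyap A (f s) (m s))).
    exact (is_derive_lyap A f m s _ _ HF HM).
  - destruct (Hpos s ltac:(lra)).
    apply Rmult_le_0_r; [apply lyap_rate_nonpos; auto|apply Rlt_le, exp_pos].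
Qed.

Lemma solution_exp_bound f m : is_solution beta delta eta1 eta2 K f m ->
  0 <= f 0 -> 0 <= m 0 -> forall t, 0 <= t ->
  0 <= f t /\ 0 <= m t /\ (f t + m t) * exp (k * t) <= lyap A (f 0) (m 0).
Proof.
  intros Hsol Hf0 Hm0 t Ht.
  destruct (solution_nonneg f m Hsol Hf0 Hm0 t Ht) as [Hf Hm].
  repeat split; auto. eapply Rle_trans; [|exact (solution_lyap_decay f m Hsol Hf0 Hm0 t Ht)].
  apply Rmult_le_compat_r; [apply Rlt_le, exp_pos|apply add_le_lyap; auto].
Qed.

End Model.

Lemma is_lim_exp_neg k : 0 < k -> is_lim (fun t => exp (- k * t)) p_infty 0.
Proof.
  intros Hk.
  apply (is_lim_ext (fun t => exp (- k * t + 0))); [intros; now rewrite Rplus_0_r|].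
  apply (is_lim_comp_lin exp (- k) 0 p_infty 0); [|lra].
  replace (Rbar_plus (Rbar_mult (- k) p_infty) 0) with m_infty; [exact is_lim_exp_m|].
  simpl. case Rle_dec; [intros; exfalso; lra|reflexivity].
Qed.

Lemma is_lim_of_exp_bound h W k : 0 < k ->
  (forall t, 0 <= t -> 0 <= h t /\ h t * exp (k * t) <= W) -> is_lim h p_infty 0.
Proof.
  intros Hk Hh.
  apply (is_lim_le_le_loc (fun _ => 0) (fun t => W * exp (- k * t))).
  - exists 0. intros t Ht. destruct (Hh t ltac:(lra)) as [Hpos Hbnd]. split; [exact Hpos|].
    assert (Hinv : exp (k * t) * exp (- k * t) = 1)
      by (rewrite <- exp_plus, <- exp_0; f_equal; ring).
    assert (He := exp_pos (- k * t)). nra.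
  - apply is_lim_const.
  - replace (Finite 0) with (Rbar_mult W 0) by (simpl; now rewrite Rmult_0_r).
    apply is_lim_scal_l, is_lim_exp_neg, Hk.
Qed.

Lemma nrm2_le_add x y : 0 <= x -> 0 <= y -> nrm2 x y <= x + y.
Proof.
  intros Hx Hy. unfold nrm2. rewrite <- (sqrt_pow2 (x + y)) by lra.
  apply sqrt_le_1_alt. nra.
Qed.

Lemma le_nrm2_l x y : 0 <= x -> x <= nrm2 x y.
Proof.
  intros Hx. unfold nrm2. rewrite <- (sqrt_pow2 x) at 1 by exact Hx.
  apply sqrt_le_1_alt. assert (0 <= y ^ 2) by apply pow2_ge_0. lra.
Qed.

Lemma le_nrm2_r x y : 0 <= y -> y <= nrm2 x y.
Proof.
  intros Hy. unfold nrm2. rewrite <- (sqrt_pow2 y) at 1 by exact Hy.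
  apply sqrt_le_1_alt. assert (0 <= x ^ 2) by apply pow2_ge_0. lra.
Qed.

Lemma lyap_lt_of_nrm2_lt A x y d : 0 <= A -> 0 <= x -> 0 <= y -> d <= 1 ->
  nrm2 x y < d -> lyap A x y < (2 + A) * d.
Proof.
  intros HA Hx Hy Hd Hn.
  assert (x < d) by (generalize (le_nrm2_l x y Hx); lra).
  assert (y < d) by (generalize (le_nrm2_r x y Hy); lra).
  assert (x * y <= d) by nra.
  unfold lyap. nra.
Qed.

Lemma GAS_origin_of_exp_bound beta delta eta1 eta2 K A k : 0 <= A -> 0 < k ->
  (forall f m, is_solution beta delta eta1 eta2 K f m -> 0 <= f 0 -> 0 <= m 0 ->
     forall t, 0 <= t ->
     0 <= f t /\ 0 <= m t /\ (f t + m t) * exp (k * t) <= lyap A (f 0) (m 0)) ->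
  GAS_origin beta delta eta1 eta2 K.
Proof.
  intros HA Hk Hbound. split.
  - intros eps Heps. exists (Rmin 1 (eps / (2 + A))).
    split; [apply Rmin_glb_lt; [lra|apply Rdiv_lt_0_compat; lra]|].
    intros f m Hsol Hf0 Hm0 Hn t Ht.
    destruct (Hbound f m Hsol Hf0 Hm0 t Ht) as [Hf [Hm Hle]].
    assert (Hsmall := lyap_lt_of_nrm2_lt A _ _ _ HA Hf0 Hm0 (Rmin_l _ _) Hn).
    assert ((2 + A) * Rmin 1 (eps / (2 + A)) <= eps).
    { rewrite Rmult_comm. apply Rle_div_r; [lra|apply Rmin_r]. }
    assert (Hexp : 1 <= exp (k * t)) by (generalize (exp_ineq1_le (k * t)); nra).
    assert (f t + m t <= (f t + m t) * exp (k * t)) by nra.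
    generalize (nrm2_le_add _ _ Hf Hm). lra.
  - intros f m Hsol Hf0 Hm0.
    split; apply (is_lim_of_exp_bound _ (lyap A (f 0) (m 0)) k Hk);
      intros t Ht; destruct (Hbound f m Hsol Hf0 Hm0 t Ht) as [Hf [Hm Hle]];
      assert (He := exp_pos (k * t)); split; nra.
Qed.

Theorem mainTheorem7 (beta delta K eta1 eta2 : R) :
  0 < beta < 1 -> 0 < delta < 1 -> 0 < K ->
  0 <= eta1 -> 0 <= eta2 ->
  beta * K < 2 * delta + eta1 + eta2 ->
  GAS_origin beta delta eta1 eta2 K.
Proof.
  intros Hb Hd HK He1 He2 Hc.
  set (c := 2 * delta + eta1 + eta2 - beta * K).
  set (A := 2 * beta / c). set (k := Rmin delta (c / 2)).
  assert (HA : 0 <= A) by (apply Rlt_le, Rdiv_lt_0_compat; unfold c; lra).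
  assert (HAc : 2 * beta <= A * c) by (unfold A; right; field; unfold c; lra).
  assert (Hk : 0 < k) by (apply Rmin_glb_lt; unfold c; lra).
  assert (HkA : k * A <= beta).
  { apply (Rle_trans _ (c / 2 * A)); [apply Rmult_le_compat_r, Rmin_r; exact HA|].
    right. unfold A. field. unfold c. lra. }
  apply (GAS_origin_of_exp_bound _ _ _ _ _ A k HA Hk).
  exact (solution_exp_bound beta delta eta1 eta2 K HK A k
           ltac:(lra) He1 He2 HA HAc (Rmin_l _ _) HkA).
Qed.
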